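(* Let $\{|0\rangle,|1\rangle,|2\rangle\}$ be the computational basis of $\mathbb{C}^3$, $P_k=|k\rangle\langle k|$, and define on $\mathbb{C}^3\otimes\mathbb{C}^3$: $Q=I\otimes I-\sum_{k=0}^{2}P_k\otimes P_k-P_2\otimes P_0$, $|\Psi\rangle=\frac{1}{\sqrt3}(|00\rangle+|11\rangle+|22\rangle)$, $\rho_{ent}=\frac38|\Psi\rangle\langle\Psi|+\frac18 Q$, $|\Phi_a\rangle=|2\rangle\otimes\big(\sqrt{\tfrac{1+a}{2}}|0\rangle+\sqrt{\tfrac{1-a}{2}}|2\rangle\big)$ and $\rho_a=\frac{8a}{8a+1}\rho_{ent}+\frac{1}{8a+1}|\Phi_a\rangle\langle\Phi_a|$. Then for every $0<a<1$, $$d_{\max}(\rho_a)=\frac{2\sqrt2\,a}{8a+1},$$ and this value is attained, for example, by any diagonal unitary $U^B\in\mathbb{C}^{3\times3}$ with $U^B_{0,0}=-U^B_{1,1}=U^B_{2,2}$.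
   Context: For a state $\rho$ on $\mathbb{C}^M\otimes\mathbb{C}^N$ let $\rho_B=\mathrm{Tr}_A(\rho)$. A unitary $U^B$ on $\mathbb{C}^N$ is called cyclic for $\rho$ if $[\rho_B,U^B]=0$. Set $\rho_f=(I\otimes U^B)\rho(I\otimes U^{B\dagger})$ and define the Fu distance $d(\rho,U^B)=\frac{1}{\sqrt2}\|\rho-\rho_f\|_F$ (Frobenius norm $\|X\|_F=\sqrt{\mathrm{Tr}(X^\dagger X)}$). Define $d_{\max}(\rho)=\max\{d(\rho,U^B): U^B\text{ unitary},\ [\rho_B,U^B]=0\}$. *)

From HB Require Import structures.
From mathcomp Require Import all_boot all_order all_algebra.
From mathcomp Require Import spectral.
From mathcomp Require Import mxtens.
Set Implicit Arguments. Unset Strict Implicit. Unset Printing Implicit Defensive.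
Import Order.TTheory GRing.Theory Num.Theory.
Local Open Scope ring_scope.
Local Open Scope sesquilinear_scope.

(* Complex scalars: an arbitrary numeric closed field C (e.g. complex R). *)
Section Defs.
Variable C : numClosedFieldType.

Definition i0 : 'I_3 := @Ordinal 3 0 isT.
Definition i1 : 'I_3 := @Ordinal 3 1 isT.
Definition i2 : 'I_3 := @Ordinal 3 2 isT.

Definition ket (k : 'I_3) : 'cV[C]_3 := delta_mx k 0.
Definition proj (k : 'I_3) : 'M[C]_3 := delta_mx k k.

Definition outer {n} (v : 'cV[C]_n) : 'M[C]_n := v *m v ^t*.

(* partial trace over the first factor A = C^M of C^M (x) C^N;
   the tensor product is the Kronecker product tensmx (index (i,j) |-> i*N+j) *)
Definition ptraceA {M N : nat} (rho : 'M[C]_(M * N)) : 'M[C]_N :=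
  \matrix_(j, l) \sum_(i < M) rho (mxtens_index (i, j)) (mxtens_index (i, l)).

Definition frob {n} (X : 'M[C]_n) : C := sqrtC (\tr (X ^t* *m X)).

Definition rho_f {M N : nat} (rho : 'M[C]_(M * N)) (U : 'M[C]_N) : 'M[C]_(M * N) :=
  (1%:M *t U) *m rho *m (1%:M *t U) ^t*.

Definition fu_dist {M N : nat} (rho : 'M[C]_(M * N)) (U : 'M[C]_N) : C :=
  (sqrtC 2)^-1 * frob (rho - rho_f rho U).

Definition cyclic_for {M N : nat} (rho : 'M[C]_(M * N)) (U : 'M[C]_N) : Prop :=
  U \is unitarymx /\ ptraceA rho *m U = U *m ptraceA rho.

Definition is_dmax {M N : nat} (rho : 'M[C]_(M * N)) (v : C) : Prop :=
  (exists U, cyclic_for rho U /\ fu_dist rho U = v) /\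
  (forall U, cyclic_for rho U -> fu_dist rho U <= v).

Definition Qop : 'M[C]_(3 * 3) :=
  1%:M - \sum_(k < 3) (proj k *t proj k) - proj i2 *t proj i0.

Definition Psi : 'cV[C]_(3 * 3) :=
  (sqrtC 3)^-1 *: (ket i0 *t ket i0 + ket i1 *t ket i1 + ket i2 *t ket i2).

Definition rho_ent : 'M[C]_(3 * 3) := (3 / 8) *: outer Psi + (1 / 8) *: Qop.

Definition Phi (a : C) : 'cV[C]_(3 * 3) :=
  ket i2 *t (sqrtC ((1 + a) / 2) *: ket i0 + sqrtC ((1 - a) / 2) *: ket i2).

Definition rho_a (a : C) : 'M[C]_(3 * 3) :=
  (8 * a / (8 * a + 1)) *: rho_ent + (1 / (8 * a + 1)) *: outer (Phi a).

End Defs.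

From HB Require Import structures.
From mathcomp Require Import all_boot all_order all_algebra.
From mathcomp Require Import spectral mxtens ring.
Set Implicit Arguments. Unset Strict Implicit. Unset Printing Implicit Defensive.
Import Order.TTheory GRing.Theory Num.Theory.
Local Open Scope ring_scope.
Local Open Scope sesquilinear_scope.

(* Cut an operator on C^3 (x) C^3 into the 3x3 blocks X_ik indexed by the first
   factor: rho_B is the sum of the diagonal blocks and rho_f has blocks
   U X_ik U^*.  With d = a/(8a+1), the blocks of rho_a are d E_ik off the
   diagonal, d I at positions 0 and 1, and at position 2 a block B coupling |0>
   and |2>.  Commuting with rho_B = 2 d I + B forces U_10 = U_12 = 0 and
   U_22 = U_00, so |U_11| = 1 and only the six off-diagonal blocks move, each by
   d^2 (2 - 2 Re (U_mm conj U_ii)).  Summing, ||rho - rho_f||^2 =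
   d^2 (16 - 4 |U_00 + U_11|^2) <= 16 d^2, with equality iff U_00 = - U_11. *)

Lemma sum_mxtens (V : nmodType) M N (F : 'I_(M * N) -> V) :
  \sum_k F k = \sum_(i < M) \sum_(j < N) F (mxtens_index (i, j)).
Proof.
rewrite pair_big /= (reindex (@mxtens_index M N)) /=; first by apply: eq_bigr => -[].
by exists (@mxtens_unindex M N) => x _; rewrite (mxtens_indexK, mxtens_unindexK).
Qed.

Section TensorBlocks.
Variable R : pzRingType.

Definition tblock M N (X : 'M[R]_(M * N)) (i k : 'I_M) : 'M[R]_N :=
  \matrix_(j, l) X (mxtens_index (i, j)) (mxtens_index (k, l)).

Definition tcblock M N (v : 'cV[R]_(M * N)) (i : 'I_M) : 'cV[R]_N :=
  \col_j v (mxtens_index (i, j)) 0.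

Variables M N : nat.
Implicit Types (X Y : 'M[R]_(M * N)) (u v : 'cV[R]_(M * N)) (i k : 'I_M).

Lemma tblockD X Y i k : tblock (X + Y) i k = tblock X i k + tblock Y i k.
Proof. by apply/matrixP => j l; rewrite !mxE. Qed.

Lemma tblockB X Y i k : tblock (X - Y) i k = tblock X i k - tblock Y i k.
Proof. by apply/matrixP => j l; rewrite !mxE. Qed.

Lemma tblockZ c X i k : tblock (c *: X) i k = c *: tblock X i k.
Proof. by apply/matrixP => j l; rewrite !mxE. Qed.

Lemma tblock_sum n (F : 'I_n -> 'M[R]_(M * N)) i k :
  tblock (\sum_m F m) i k = \sum_m tblock (F m) i k.
Proof.
by apply/matrixP => j l; rewrite !(mxE, summxE); apply: eq_bigr => m _; rewrite mxE.
Qed.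

Lemma tblock_tens (A : 'M[R]_M) (B : 'M[R]_N) i k : tblock (A *t B) i k = A i k *: B.
Proof. by apply/matrixP => j l; rewrite !mxE !mxtens_indexK. Qed.

Lemma tblock1 i k : tblock (1%:M : 'M[R]_(M * N)) i k = (i == k)%:R *: 1%:M.
Proof.
apply/matrixP => j l; rewrite !mxE (can_eq (@mxtens_indexK M N)) xpair_eqE.
by case: (i == k); rewrite ?mul1r ?mul0r.
Qed.

Lemma tblockM X Y i k : tblock (X *m Y) i k = \sum_m tblock X i m *m tblock Y m k.
Proof.
apply/matrixP => j l; rewrite !mxE summxE sum_mxtens.
by apply: eq_bigr => m _; rewrite !mxE; apply: eq_bigr => x _; rewrite !mxE.
Qed.

Lemma mxtrace_tblock X : \tr X = \sum_i \tr (tblock X i i).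
Proof.
rewrite /mxtrace sum_mxtens.
by apply: eq_bigr => i _; apply: eq_bigr => j _; rewrite mxE.
Qed.

Lemma tcblockD u v i : tcblock (u + v) i = tcblock u i + tcblock v i.
Proof. by apply/matrixP => j l; rewrite !mxE. Qed.

Lemma tcblockZ c v i : tcblock (c *: v) i = c *: tcblock v i.
Proof. by apply/matrixP => j l; rewrite !mxE. Qed.

Lemma tcblock_tens (u : 'cV[R]_M) (w : 'cV[R]_N) i : tcblock (u *t w) i = u i 0 *: w.
Proof. by apply/matrixP => j l; rewrite !mxE !mxtens_indexK !ord1. Qed.

End TensorBlocks.

Section AdjointBlocks.
Variable C : numClosedFieldType.

Definition frob2 n (X : 'M[C]_n) : C := \tr (X ^t* *m X).

Lemma frob2_ge0 n (X : 'M[C]_n) : 0 <= frob2 X.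
Proof.
apply: sumr_ge0 => i _; rewrite mxE; apply: sumr_ge0 => j _.
by rewrite !mxE mulrC mul_conjC_ge0.
Qed.

Lemma adjmxB m n (A B : 'M[C]_(m, n)) : (A - B) ^t* = A ^t* - B ^t*.
Proof. by rewrite linearB map_mxB. Qed.

Lemma adjmxZ m n c (A : 'M[C]_(m, n)) : (c *: A) ^t* = c^* *: A ^t*.
Proof. by rewrite linearZ map_mxZ. Qed.

Lemma adjmxM m n p (A : 'M[C]_(m, n)) (B : 'M[C]_(n, p)) : (A *m B) ^t* = B ^t* *m A ^t*.
Proof. by rewrite trmx_mul map_mxM. Qed.

Lemma adj_delta_mx m n (i : 'I_m) (j : 'I_n) : (delta_mx i j : 'M[C]_(m, n)) ^t* = delta_mx j i.
Proof. by rewrite trmx_delta map_delta_mx. Qed.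

Variables M N : nat.
Implicit Types (X : 'M[C]_(M * N)) (i k : 'I_M).

Lemma tblock_adj X i k : tblock (X ^t*) i k = (tblock X k i) ^t*.
Proof. by apply/matrixP => j l; rewrite !mxE. Qed.

Lemma tblock_outer (v : 'cV[C]_(M * N)) i k :
  tblock (outer v) i k = tcblock v i *m (tcblock v k) ^t*.
Proof. by apply/matrixP => j l; rewrite !mxE !big_ord1 !mxE. Qed.

Lemma ptraceA_tblock X : ptraceA X = \sum_i tblock X i i.
Proof.
by apply/matrixP => j l; rewrite !mxE summxE; apply: eq_bigr => i _; rewrite mxE.
Qed.

Lemma frob2_tblock X : frob2 X = \sum_i \sum_m frob2 (tblock X m i).
Proof.
rewrite /frob2 mxtrace_tblock; apply: eq_bigr => i _; rewrite tblockM raddf_sum.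
by apply: eq_bigr => m _; rewrite tblock_adj.
Qed.

Lemma tblock_rho_f X (U : 'M[C]_N) i k :
  tblock (rho_f X U) i k = U *m tblock X i k *m U ^t*.
Proof.
have tblock_IU m m' : tblock (1%:M *t U) m m' = (m == m')%:R *: U.
  by rewrite tblock_tens mxE.
rewrite /rho_f tblockM (bigD1 k) //= big1 => [|m /negPf km]; last first.
  by rewrite tblock_adj tblock_IU eq_sym km scale0r linear0 map_mx0 mulmx0.
rewrite tblock_adj tblock_IU eqxx scale1r addr0 tblockM (bigD1 i) //= big1 => [|m /negPf im].
  by rewrite tblock_IU eqxx scale1r addr0.
by rewrite tblock_IU eq_sym im scale0r mul0mx.
Qed.

End AdjointBlocks.

Section UnitaryConjugation.
Variables (C : numClosedFieldType) (n : nat).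
Implicit Types (U X : 'M[C]_n) (i m : 'I_n).

Lemma unitary_conj_comm U X : U *m U ^t* = 1%:M -> X *m U = U *m X -> U *m X *m U ^t* = X.
Proof. by move=> hU hXU; rewrite -hXU -mulmxA hU mulmx1. Qed.

Lemma delta_mx_sandwich i m X : delta_mx i m *m X *m delta_mx m i = X m m *: delta_mx i i.
Proof.
apply/matrixP => x y; rewrite !mxE (bigD1 m) //= big1 => [|z /negPf zm]; last first.
  by rewrite [delta_mx m i z y]mxE zm mulr0.
rewrite [delta_mx m i m y]mxE eqxx /= addr0 mxE (bigD1 m) //= big1 => [|w /negPf wm].
  rewrite !mxE !eqxx !andbT addr0.
  by case: (x == i); case: (y == i); rewrite /= ?mul1r ?mulr1 ?mul0r ?mulr0.
by rewrite mxE wm andbF mul0r.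
Qed.

Lemma mxtrace_delta_sandwich i m X Y :
  \tr (delta_mx i m *m X *m delta_mx m i *m Y) = X m m * Y i i.
Proof.
rewrite delta_mx_sandwich -scalemxAl mxtraceZ; congr (_ * _).
rewrite /mxtrace (bigD1 i) //= big1 => [|x /negPf xi].
  rewrite addr0 mxE (bigD1 i) //= big1 ?mxE ?eqxx ?mul1r ?addr0 //.
  by move=> z /negPf zi; rewrite mxE zi andbF mul0r.
by rewrite mxE big1 // => z _; rewrite mxE xi mul0r.
Qed.

Lemma frob2_delta_sub_unitary_conj U m i d : U \is unitarymx ->
  frob2 (d *: delta_mx m i - U *m (d *: delta_mx m i) *m U ^t*) =
  d * d^* * (2 - U m m * (U i i)^* - U i i * (U m m)^*).
Proof.
move=> /unitarymxP hU; have hU' : U ^t* *m U = 1%:M by apply: mulmx1C.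
rewrite /frob2 -scalemxAr -scalemxAl -scalerBr adjmxZ -scalemxAl -scalemxAr scalerA mxtraceZ.
congr (_ * _); first by rewrite mulrC.
rewrite adjmxB !adjmxM trmxCK adj_delta_mx mulmxBl !mulmxBr !raddfB /=.
have tr_dd : \tr (delta_mx i m *m delta_mx m i) = 1 :> C.
  by have := mxtrace_delta_sandwich i m 1%:M 1%:M; rewrite !mulmx1 !mxE !eqxx mulr1.
have tr_conj : \tr (U *m (delta_mx i m *m U ^t*) *m (U *m delta_mx m i *m U ^t*)) = 1.
  rewrite -!mulmxA [U ^t* *m (U *m _)]mulmxA hU' mul1mx mxtrace_mulC.
  by rewrite -!mulmxA hU' mulmx1 tr_dd.
rewrite tr_conj tr_dd !mulmxA mxtrace_delta_sandwich.
rewrite mxtrace_mulC !mulmxA mxtrace_delta_sandwich !mxE.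
ring.
Qed.

Lemma diag_unitarymx (v : 'rV[C]_n) :
  (forall j, v 0 j * (v 0 j)^* = 1) -> diag_mx v \is unitarymx.
Proof.
move=> hv; apply/unitarymxP/matrixP => j l.
rewrite tr_diag_mx map_diag_mx mul_mx_diag !mxE.
by case: eqP => [->|_]; rewrite ?mulr1n ?hv ?mulr0n ?mul0r.
Qed.

End UnitaryConjugation.

Lemma ord3P (j : 'I_3) : [\/ j = i0, j = i1 | j = i2].
Proof. by case: j => [[|[|[|//]]] p]; [apply: Or31 | apply: Or32 | apply: Or33]; apply: val_inj. Qed.

Lemma sum3 (V : nmodType) (F : 'I_3 -> V) : \sum_i F i = F i0 + F i1 + F i2.
Proof. by rewrite !big_ord_recl big_ord0 addr0 addrA; congr (F _ + F _ + F _); apply: val_inj. Qed.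

Section Qutrit.
Variable C : numClosedFieldType.
Implicit Types (i k : 'I_3).

Lemma ketE k i : ket C k i 0 = (i == k)%:R.
Proof. by rewrite mxE andbT. Qed.

Lemma ket_adj_ket i k : ket C i *m (ket C k) ^t* = delta_mx i k.
Proof. by rewrite /ket adj_delta_mx mul_delta_mx. Qed.

Lemma sum_projE i k : \sum_m proj C m i k *: proj C m = (i == k)%:R *: proj C i.
Proof.
rewrite (bigD1 i) //= big1 => [|m /negPf mi]; last by rewrite mxE eq_sym mi scale0r.
by rewrite addr0 mxE eqxx [k == i]eq_sym.
Qed.

Lemma tblock_Qop i k : tblock (Qop C) i k =
  (i == k)%:R *: (1%:M - delta_mx i i) - ((i == i2) && (k == i2))%:R *: delta_mx i0 i0.
Proof.
rewrite /Qop !tblockB tblock1 tblock_sum tblock_tens.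
under eq_bigr do rewrite tblock_tens.
by rewrite sum_projE scalerBr mxE.
Qed.

Lemma tblock_outer_Psi i k : tblock (outer (Psi C)) i k = 3^-1 *: delta_mx i k.
Proof.
have tcblock_Psi j : tcblock (Psi C) j = (sqrtC 3)^-1 *: ket C j.
  rewrite /Psi tcblockZ !tcblockD !tcblock_tens !ketE.
  by case: (ord3P j) => ->; rewrite /= ?scale1r ?scale0r ?addr0 ?add0r.
rewrite tblock_outer !tcblock_Psi adjmxZ -scalemxAl -scalemxAr scalerA ket_adj_ket.
by rewrite geC0_conj ?invr_ge0 ?sqrtC_ge0 ?ler0n // -invfM -expr2 sqrtCK.
Qed.

Lemma tblock_rho_ent i k : tblock (rho_ent C) i k = 8^-1 *:
  (delta_mx i k + (i == k)%:R *: (1%:M - delta_mx i i)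
   - ((i == i2) && (k == i2))%:R *: delta_mx i0 i0).
Proof.
rewrite /rho_ent tblockD !tblockZ tblock_outer_Psi tblock_Qop scalerA mul1r.
have -> : 3 / 8 * 3^-1 = 8^-1 :> C by rewrite mulrAC divff ?mul1r ?pnatr_eq0.
by rewrite -scalerDr addrA.
Qed.

Definition Phi_B (a : C) : 'cV[C]_3 :=
  sqrtC ((1 + a) / 2) *: ket C i0 + sqrtC ((1 - a) / 2) *: ket C i2.

Lemma tblock_outer_Phi a i k :
  tblock (outer (Phi a)) i k = ((i == i2) && (k == i2))%:R *: outer (Phi_B a).
Proof.
rewrite tblock_outer !tcblock_tens !ketE adjmxZ -scalemxAl -scalemxAr scalerA.
by rewrite conjC_nat -natrM mulnb.
Qed.
End Qutrit.

Lemma lin2_eq0 (F : fieldType) (s t x y : F) : s ^+ 2 - t ^+ 2 != 0 ->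
  s * x + t * y = 0 -> t * x + s * y = 0 -> x = 0 /\ y = 0.
Proof.
move=> det_neq0 ex ey.
have /eqP : (s ^+ 2 - t ^+ 2) * x = s * (s * x + t * y) - t * (t * x + s * y) by ring.
have /eqP : (s ^+ 2 - t ^+ 2) * y = s * (t * x + s * y) - t * (s * x + t * y) by ring.
by rewrite ex ey !mulr0 subrr !mulf_eq0 (negPf det_neq0) => /= /eqP-> /eqP->.
Qed.

Section RhoA.
Variables (C : numClosedFieldType) (a : C).
Hypotheses (a_gt0 : 0 < a) (a_lt1 : a < 1).
Implicit Types (i k : 'I_3) (U : 'M[C]_3).

Let d := a / (8 * a + 1).
Let p := (1 + a) / 2 / (8 * a + 1).
Let q := sqrtC ((1 + a) / 2) * sqrtC ((1 - a) / 2) / (8 * a + 1).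
Let B := tblock (rho_a a) i2 i2.

Lemma den_rho_a_neq0 : 8 * a + 1 != 0.
Proof. by rewrite gt_eqF // ltr_wpDl ?mulr_ge0 ?ler0n ?ltW. Qed.

Lemma d_ge0 : 0 <= d.
Proof.
apply: divr_ge0; first exact: ltW.
by rewrite addr_ge0 ?ler01 // mulr_ge0 ?ler0n // ltW.
Qed.

Lemma tblock_rho_a i k : tblock (rho_a a) i k =
  d *: (delta_mx i k + (i == k)%:R *: (1%:M - delta_mx i i)
        - ((i == i2) && (k == i2))%:R *: delta_mx i0 i0)
  + ((i == i2) && (k == i2))%:R / (8 * a + 1) *: outer (Phi_B a).
Proof.
rewrite /rho_a tblockD !tblockZ tblock_rho_ent tblock_outer_Phi !scalerA.
congr (_ *: _ + _ *: _); last by rewrite mulrC mul1r.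
by rewrite /d; field; rewrite den_rho_a_neq0.
Qed.

Lemma tblock_rho_a_offdiag i k : i != k -> tblock (rho_a a) i k = d *: delta_mx i k.
Proof.
move=> /negPf ik; have ik2 : (i == i2) && (k == i2) = false.
  by apply/andP => -[/eqP ei /eqP ek]; rewrite ei ek eqxx in ik.
by rewrite tblock_rho_a ik ik2 !scale0r mul0r scale0r !subr0 !addr0.
Qed.

Lemma tblock_rho_a_diag i : i != i2 -> tblock (rho_a a) i i = d *: 1%:M.
Proof.
move=> /negPf ei; rewrite tblock_rho_a ei eqxx /= mul0r !scale0r subr0 addr0.
by rewrite scale1r addrC subrK.
Qed.

Lemma adj_Phi_B : (Phi_B a) ^t* = (Phi_B a)^T.
Proof.
have hp : 0 <= (1 + a) / 2 by rewrite divr_ge0 ?ler0n // addr_ge0 // ltW.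
have hm : 0 <= (1 - a) / 2 by rewrite divr_ge0 ?ler0n // subr_ge0 ltW.
rewrite /Phi_B /ket !linearD !linearZ /= !trmx_delta map_mxD !map_mxZ !map_delta_mx /=.
by rewrite !geC0_conj ?sqrtC_ge0.
Qed.

Lemma tblock_rho_a22E j l : B j l =
  if j == i1 then (l == i1)%:R * d else if l == i1 then 0 else if j == l then p else q.
Proof.
rewrite /B tblock_rho_a eqxx /= mul1r /outer adj_Phi_B.
case: (ord3P j) => ->; case: (ord3P l) => ->;
  rewrite /= !mxE /= !big_ord1 !mxE /= ?(mulr1, mulr0, addr0, add0r, mul0r, mul1r, subr0);
  rewrite /p /q /d; try rewrite -expr2 sqrtCK;
  by field; rewrite den_rho_a_neq0.
Qed.

Lemma q_neq0 : q != 0.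
Proof.
rewrite /q !mulf_neq0 ?invr_eq0 ?den_rho_a_neq0 ?sqrtC_eq0 //.
  by rewrite mulf_neq0 ?invr_eq0 ?pnatr_eq0 // gt_eqF // addr_gt0.
by rewrite mulf_neq0 ?invr_eq0 ?pnatr_eq0 // subr_eq0 eq_sym lt_eqF.
Qed.

Lemma det_block22_neq0 : (p - d) ^+ 2 - q ^+ 2 != 0.
Proof.
have -> : (p - d) ^+ 2 - q ^+ 2 = - (a * (1 - a)) / (2 * (8 * a + 1) ^+ 2).
  by rewrite /q !expr_div_n exprMn !sqrtCK /p /d; field; rewrite den_rho_a_neq0.
rewrite mulf_neq0 ?invr_eq0 ?oppr_eq0 ?mulf_neq0 ?expf_neq0 ?den_rho_a_neq0 ?pnatr_eq0 //.
  by rewrite gt_eqF.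
by rewrite subr_eq0 eq_sym lt_eqF.
Qed.

Lemma comm_ptraceA_rho_a U :
  ptraceA (rho_a a) *m U = U *m ptraceA (rho_a a) <-> B *m U = U *m B.
Proof.
rewrite ptraceA_tblock sum3 (tblock_rho_a_diag (i:=i0)) // (tblock_rho_a_diag (i:=i1)) // -/B.
rewrite !mulmxDl !mulmxDr -!scalemxAl -!scalemxAr mul1mx mulmx1.
by split => [/addrI|->].
Qed.

Lemma comm_tblock_rho_a22 U : B *m U = U *m B ->
  [/\ U i1 i0 = 0, U i1 i2 = 0 & U i2 i2 = U i0 i0].
Proof.
move=> BU.
have e10 : (p - d) * U i1 i0 + q * U i1 i2 = (U *m B) i1 i0 - (B *m U) i1 i0.
  by rewrite !mxE !sum3 !tblock_rho_a22E /=; ring.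
have e12 : q * U i1 i0 + (p - d) * U i1 i2 = (U *m B) i1 i2 - (B *m U) i1 i2.
  by rewrite !mxE !sum3 !tblock_rho_a22E /=; ring.
have e02 : q * (U i2 i2 - U i0 i0) = (B *m U) i0 i2 - (U *m B) i0 i2.
  by rewrite !mxE !sum3 !tblock_rho_a22E /=; ring.
move: e10 e12 e02; rewrite BU !subrr => e10 e12 e02.
have [-> ->] := lin2_eq0 det_block22_neq0 e10 e12.
by move/eqP: e02; rewrite mulf_eq0 (negPf q_neq0) subr_eq0 => /eqP.
Qed.

Lemma diag_comm_tblock_rho_a22 U : is_diag_mx U -> U i0 i0 = U i2 i2 -> B *m U = U *m B.
Proof.
move=> /is_diag_mxP U_diag U02; apply/matrixP => j l.
rewrite !mxE !sum3 !tblock_rho_a22E.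
case: (ord3P j) => ->; case: (ord3P l) => ->;
  rewrite ?(U_diag i0 i1, U_diag i1 i0, U_diag i0 i2, U_diag i2 i0, U_diag i1 i2, U_diag i2 i1) //=;
  by rewrite -?U02; ring.
Qed.

Lemma frob2_rho_a_sub_rho_f U : cyclic_for (rho_a a) U ->
  frob2 (rho_a a - rho_f (rho_a a) U) = d ^+ 2 * (16 - 4 * `|U i0 i0 + U i1 i1| ^+ 2).
Proof.
case=> uU /comm_ptraceA_rho_a BU; have /unitarymxP UU := uU.
have [U10 U12 U22] := comm_tblock_rho_a22 BU.
have U11 : U i1 i1 * (U i1 i1)^* = 1.
  have : (U *m U ^t*) i1 i1 = (1%:M : 'M[C]_3) i1 i1 by rewrite UU.
  by rewrite !mxE sum3 !mxE U10 U12 !mul0r add0r addr0.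
have diag_fixed i : i != i2 -> tblock (rho_a a) i i - U *m tblock (rho_a a) i i *m U ^t* = 0.
  move=> ?; rewrite tblock_rho_a_diag // unitary_conj_comm ?subrr //.
  by rewrite -scalemxAl -scalemxAr mul1mx mulmx1.
have B_fixed : B - U *m B *m U ^t* = 0 by rewrite unitary_conj_comm ?subrr.
have frob2_0 : frob2 (0 : 'M[C]_3) = 0 by rewrite /frob2 mulmx0 mxtrace0.
rewrite frob2_tblock !sum3 !tblockB !tblock_rho_f -/B.
rewrite (diag_fixed i0) // (diag_fixed i1) // B_fixed frob2_0.
rewrite !tblock_rho_a_offdiag // !frob2_delta_sub_unitary_conj //.
have -> : (16 : C) = 12 + 4 * (U i1 i1 * (U i1 i1)^*) by rewrite U11; ring.
by rewrite normCK rmorphD geC0_conj ?d_ge0 // U22; ring.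
Qed.

Lemma dmax_rho_aE : (sqrtC 2)^-1 * sqrtC (d ^+ 2 * 16) = 2 * sqrtC 2 * a / (8 * a + 1).
Proof.
have sqrt2_neq0 : sqrtC 2 != 0 :> C by rewrite sqrtC_eq0 pnatr_eq0.
have -> : d ^+ 2 * 16 = (4 * d) ^+ 2 by ring.
rewrite sqrCK; last by apply: mulr_ge0; [exact: ler0n | exact: d_ge0].
have -> : (4 : C) = 2 * sqrtC 2 ^+ 2 by rewrite sqrtCK -natrM.
by rewrite /d; field; rewrite den_rho_a_neq0 sqrt2_neq0.
Qed.

Lemma fu_dist_rho_a U : cyclic_for (rho_a a) U ->
  fu_dist (rho_a a) U = (sqrtC 2)^-1 * sqrtC (d ^+ 2 * (16 - 4 * `|U i0 i0 + U i1 i1| ^+ 2)).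
Proof. by move=> cU; rewrite /fu_dist /frob -/(frob2 _) frob2_rho_a_sub_rho_f. Qed.

Lemma fu_dist_rho_a_le U : cyclic_for (rho_a a) U ->
  fu_dist (rho_a a) U <= 2 * sqrtC 2 * a / (8 * a + 1).
Proof.
move=> cU; have := frob2_ge0 (rho_a a - rho_f (rho_a a) U).
rewrite fu_dist_rho_a // -dmax_rho_aE frob2_rho_a_sub_rho_f // => frob2_ge0.
rewrite ler_pM2l ?invr_gt0 ?sqrtC_gt0 ?ltr0n // ler_sqrtC ?nnegrE //; last first.
  by rewrite mulr_ge0 ?exprn_ge0 ?d_ge0 ?ler0n.
by rewrite ler_wpM2l ?exprn_ge0 ?d_ge0 // gerBl mulr_ge0 ?ler0n ?exprn_ge0.
Qed.

Lemma fu_dist_rho_a_antipodal U : cyclic_for (rho_a a) U -> U i0 i0 = - U i1 i1 ->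
  fu_dist (rho_a a) U = 2 * sqrtC 2 * a / (8 * a + 1).
Proof.
move=> cU U01; rewrite fu_dist_rho_a // U01 addNr normr0 expr0n mulr0 subr0.
exact: dmax_rho_aE.
Qed.

Lemma cyclic_for_rho_a_diag U : is_diag_mx U -> U \is unitarymx -> U i0 i0 = U i2 i2 ->
  cyclic_for (rho_a a) U.
Proof.
by move=> dU uU U02; split=> //; apply/comm_ptraceA_rho_a/diag_comm_tblock_rho_a22.
Qed.
End RhoA.

Unset Implicit Arguments.
Theorem theorem5 (C : numClosedFieldType) (a : C) (ha0 : 0 < a) (ha1 : a < 1) :
  is_dmax (rho_a a) (2 * sqrtC 2 * a / (8 * a + 1)) /\
  (forall U : 'M[C]_3,
     is_diag_mx U -> U \is unitarymx ->
     U i0 i0 = - U i1 i1 -> U i0 i0 = U i2 i2 ->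
     cyclic_for (rho_a a) U /\
     fu_dist (rho_a a) U = 2 * sqrtC 2 * a / (8 * a + 1)).
Proof.
have attained U : is_diag_mx U -> U \is unitarymx ->
    U i0 i0 = - U i1 i1 -> U i0 i0 = U i2 i2 ->
    cyclic_for (rho_a a) U /\ fu_dist (rho_a a) U = 2 * sqrtC 2 * a / (8 * a + 1).
  move=> dU uU U01 U02; have cU := cyclic_for_rho_a_diag ha0 ha1 dU uU U02.
  by split; last exact: fu_dist_rho_a_antipodal.
split=> //; split; last by move=> U; exact: fu_dist_rho_a_le.
pose U0 : 'M[C]_3 := diag_mx (\row_j (if j == i1 then -1 else 1)).
exists U0; apply: attained; rewrite ?mxE /= ?mulr1n ?opprK //.
- exact: diag_mx_is_diag.
- apply: diag_unitarymx => j; rewrite mxE.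
  by case: ifP => _; rewrite ?rmorphN1 ?conjC1 ?mulN1r ?opprK ?mulr1.
Qed.
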